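(* Let $d\ge1$ and let $LG(d,2d)$ be the Lagrangian Grassmannian of $d$-dimensional isotropic subspaces of $\mathbb C^{2d}$ equipped with a symplectic form. Let $U,V,W\in LG(d,2d)$ be pairwise in general position, i.e. $U\cap V=U\cap W=V\cap W=0$. Then there is a unique morphism $f\colon\mathbb P^1\to LG(d,2d)$ of degree $d$ with $f(0)=U$, $f(1)=V$, $f(\infty)=W$.
   Context: The degree of a morphism $f\colon\mathbb P^1\to LG(d,2d)$ is $\int f_*[\mathbb P^1]\cdot\sigma_1$, where $\sigma_1$ is the class of the Schubert divisor (the restriction of the Schubert divisor class of the ambient Grassmannian $G(d,2d)$). *)

From HB Require Import structures.
From mathcomp Require Import all_boot all_order all_algebra.
From mathcomp Require Import reals.
From mathcomp.real_closed Require Import complex.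
Set Implicit Arguments. Unset Strict Implicit. Unset Printing Implicit Defensive.
Import Order.TTheory GRing.Theory Num.Theory.
Local Open Scope ring_scope.

(* Ground field: the complex numbers C = R[i] for R a (complete archimedean)
   real field; points of P^1 are nonzero pairs (s,t) in C^2 up to scaling,
   with 0 = [0:1], 1 = [1:1], infinity = [1:0]. *)

(* Subspaces of C^n are row spaces of matrices; a d-dimensional subspace is
   the row space of a rank-d matrix in 'M_(d, n). *)

Definition lagrangian (C : fieldType) (d n : nat) (J : 'M[C]_n)
    (U : 'M[C]_(d, n)) : Prop :=
  \rank U = d /\ U *m J *m U^T = 0.

Definition symplectic (C : fieldType) (n : nat) (J : 'M[C]_n) : Prop :=
  J^T = - J /\ \det J != 0.

(* evaluation of a binary form of degree e, encoded by the univariate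
   polynomial p (size p <= e+1), at (s,t): sum_i p_i s^i t^(e-i) *)
Definition hev (C : fieldType) (e : nat) (p : {poly C}) (s t : C) : C :=
  \sum_(i < e.+1) p`_i * s ^+ i * t ^+ (e - i).

(* (generalised) Plücker coordinates of A : all d x d minors on column
   selections g : 'I_d -> 'I_n (each is 0 or +- a Plücker coordinate). *)
Definition pluck (C : fieldType) (d n : nat) (A : 'M[C]_(d, n))
    (g : {ffun 'I_d -> 'I_n}) : C :=
  \det (colsub g A).

(* f : P^1 -> LG(d, n) (given on homogeneous coordinates) is a morphism of
   degree e: its values at points of P^1 are Lagrangian subspaces, and its
   composite with the Plücker embedding is a morphism P^1 -> P^N given by
   binary forms of degree e without common zero. The degree e is then
   deg f^*O(1) = int f_*[P^1] . sigma_1. *)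
Definition LGmorphism_deg (C : fieldType) (d n : nat) (J : 'M[C]_n)
    (f : C -> C -> 'M[C]_(d, n)) (e : nat) : Prop :=
  (forall s t : C, (s, t) != (0, 0) -> lagrangian J (f s t)) /\
  exists q : {ffun 'I_d -> 'I_n} -> {poly C},
    (forall g, (size (q g) <= e.+1)%N) /\
    (forall s t : C, (s, t) != (0, 0) -> exists g, hev e (q g) s t != 0) /\
    (forall s t : C, (s, t) != (0, 0) ->
       exists c : C, c != 0 /\
         forall g, pluck (f s t) g = c * hev e (q g) s t).

From HB Require Import structures.
From mathcomp Require Import all_boot all_order all_algebra perm ring.
From mathcomp Require Import reals.
From mathcomp.real_closed Require Import complex.
Set Implicit Arguments. Unset Strict Implicit. Unset Printing Implicit Defensive.
Import Order.TTheory GRing.Theory Num.Theory.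
Local Open Scope ring_scope.

(* Since U and W are complementary and V meets both trivially, some invertible P
   puts the three points in standard position: U, V, W are the row spaces of
   [1 0]P, [1 1]P, [0 1]P.  The pencil (s:t) |-> [t 1, s 1]P is then a morphism of
   degree d, isotropic because U, W and V = U + W are.  Conversely, after moving a
   degree-d morphism f by P^-1, its Plucker coordinate on a column selection with
   k columns in the left block vanishes to order k at (1:0), since near W it is a
   minor of an affine chart matrix whose left block vanishes there, and likewise
   to order d - k at (0:1).  Being a binary form of degree d it is therefore a
   monomial s^(d-k) t^k, whose coefficient is read off at (1:1), where f passes
   through V: so f has the Plucker coordinates of the pencil. *)

Section Polynomials.
Variable C : numFieldType.

Lemma poly_horner_eq0 (p : {poly C}) : (forall x, p.[x] = 0) -> p = 0.
Proof.
move=> p0; apply: (@roots_geq_poly_eq0 _ p [seq i%:R | i <- iota 0 (size p)]).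
- by apply/allP => _ /mapP[i _ ->]; rewrite /root p0.
- by rewrite map_inj_uniq ?iota_uniq // => i j /eqP; rewrite eqr_nat => /eqP.
- by rewrite size_map size_iota.
Qed.

Lemma poly_eq_off_roots (Q p r : {poly C}) : Q != 0 ->
  (forall x, Q.[x] != 0 -> p.[x] = r.[x]) -> p = r.
Proof.
move=> Q0 pr; apply/eqP; rewrite -subr_eq0.
suff /eqP : (p - r) * Q = 0 by rewrite mulf_eq0 (negPf Q0) orbF.
apply: poly_horner_eq0 => x; rewrite hornerM hornerD hornerN.
by have [->|/pr ->] := eqVneq Q.[x] 0; rewrite ?mulr0 ?subrr ?mul0r.
Qed.

End Polynomials.

Section BinaryForms.
Variable C : fieldType.
Implicit Types (p : {poly C}) (s t : C).

Lemma coef_Xn_dvdp p k i : 'X^k %| p -> (i < k)%N -> p`_i = 0.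
Proof. by move=> /divpK <- ik; rewrite coefMXn ik. Qed.

Lemma hevZ e a p s t : hev e (a *: p) s t = a * hev e p s t.
Proof. by rewrite /hev big_distrr; apply: eq_bigr => i _; rewrite coefZ -!mulrA. Qed.

Lemma hev_sum e (I : finType) (q : I -> {poly C}) s t :
  hev e (\sum_i q i) s t = \sum_i hev e (q i) s t.
Proof.
rewrite /hev; under eq_bigr do rewrite coef_sum !mulr_suml.
by rewrite exchange_big.
Qed.

Lemma hev_monomial e m p s t : (m <= e)%N ->
    (forall i, (i <= e)%N -> i != m -> p`_i = 0) ->
  hev e p s t = p`_m * s ^+ m * t ^+ (e - m).
Proof.
move=> me p0; rewrite /hev (bigD1 (Ordinal (me : (m < e.+1)%N))) //= big1 ?addr0 //.
move=> i /eqP ne; rewrite p0 ?mul0r //; first by rewrite -ltnS.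
by apply/eqP => im; apply: ne; apply: val_inj.
Qed.

Lemma hevXn e m s t : (m <= e)%N -> hev e 'X^m s t = s ^+ m * t ^+ (e - m).
Proof.
move=> me; rewrite (@hev_monomial _ m) ?coefXn ?eqxx ?mul1r // => i _.
by rewrite coefXn => /negPf ->.
Qed.

Lemma hev_at_t1 e p x : hev e p x 1 = (\poly_(i < e.+1) p`_i).[x].
Proof.
by rewrite /hev horner_poly; apply: eq_bigr => i _; rewrite expr1n mulr1.
Qed.

Lemma hev_at_s1 e p x : hev e p 1 x = (\poly_(i < e.+1) p`_(e - i)).[x].
Proof.
rewrite /hev horner_poly (reindex_inj rev_ord_inj) /=; apply: eq_bigr => i _.
by rewrite expr1n mulr1 subSS subKn // -ltnS.
Qed.

End BinaryForms.

Section Subspaces.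
Variable C : fieldType.

Lemma eqmx_unit_mul d n (Y B : 'M[C]_(d, n)) :
  (Y == B)%MS -> \rank B = d -> exists2 D : 'M[C]_d, D \in unitmx & Y = D *m B.
Proof.
move=> YB rB; have rY := eqmx_rank YB.
case/andP: YB => /submxP[D eY] _; exists D => //.
rewrite -row_full_unit /row_full eqn_leq rank_leq_row /=.
by rewrite -{1}rB -rY eY mxrankM_maxl.
Qed.

Lemma eqmx_mulmx_invmx m n (P : 'M[C]_n) (X A : 'M[C]_(m, n)) :
  P \in unitmx -> (X *m invmx P == A)%MS = (X == A *m P)%MS.
Proof.
move=> uP; apply/idP/idP => /eqmxP XA; apply/eqmxP.
  by have := eqmxMr P XA; rewrite mulmxKV.
by have := eqmxMr (invmx P) XA; rewrite mulmxK.
Qed.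

Lemma colsub_eqmx m1 m2 n n' (f : 'I_n' -> 'I_n)
    (A : 'M[C]_(m1, n)) (B : 'M[C]_(m2, n)) :
  (A == B)%MS -> (colsub f A == colsub f B)%MS.
Proof.
move=> /eqmxP AB; rewrite -[A]mulmx1 -[B]mulmx1 -!mulmx_colsub.
by apply/eqmxP; apply: eqmxMr.
Qed.

Lemma unitmx_decomp_cap0 d n (U V W : 'M[C]_(d, n)) (A B : 'M[C]_d) :
  V = A *m U + B *m W -> \rank V = d -> \rank (V :&: W)%MS = 0%N ->
  A \in unitmx.
Proof.
move=> eV rV rVW; rewrite unitmxE unitfE; apply/negP => /det0P[x x0 xA].
have xVW : (x *m V <= V :&: W)%MS.
  by rewrite sub_capmx submxMl eV mulmxDr !mulmxA xA mul0mx add0r submxMl.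
move/mxrankS: xVW; rewrite rVW leqn0 mxrank_eq0 mulmx_free_eq0 ?(negPf x0) //.
by rewrite /row_free rV.
Qed.

Lemma general_position_frame d (U V W : 'M[C]_(d, d + d)) :
    \rank U = d -> \rank V = d -> \rank W = d ->
    \rank (U :&: V)%MS = 0%N -> \rank (U :&: W)%MS = 0%N ->
    \rank (V :&: W)%MS = 0%N ->
  exists2 P : 'M[C]_(d + d), P \in unitmx &
    [/\ (row_mx 1%:M 0 *m P == U)%MS, row_mx 1%:M 1%:M *m P = V
      & (row_mx 0 1%:M *m P == W)%MS].
Proof.
move=> rU rV rW rUV rUW rVW.
have rUW2 : \rank (U + W)%MS = (d + d)%N.
  by have := mxrank_sum_cap U W; rewrite rUW addn0 rU rW.
have /sub_addsmxP[[A B] /= eV] : (V <= U + W)%MS.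
  by apply: submx_full; rewrite /row_full rUW2.
have uA : A \in unitmx by apply: unitmx_decomp_cap0 eV rV rVW.
have uB : B \in unitmx.
  apply: (@unitmx_decomp_cap0 _ _ W V U B A _ rV); first by rewrite eV addrC.
  by rewrite capmxC.
have AU : (A *m U :=: U)%MS by apply: eqmxMfull; rewrite row_full_unit.
have BW : (B *m W :=: W)%MS by apply: eqmxMfull; rewrite row_full_unit.
exists (col_mx (A *m U) (B *m W)).
  by rewrite -row_full_unit /row_full -addsmxE (adds_eqmx AU BW) rUW2.
rewrite !mul_row_col !mul1mx !mul0mx addr0 add0r -eV.
by split => //; apply/eqmxP.
Qed.

Lemma isotropic_submx n m1 m2 (J : 'M[C]_n) (X : 'M[C]_(m1, n)) (Y : 'M[C]_(m2, n)) :
  (Y <= X)%MS -> X *m J *m X^T = 0 -> Y *m J *m Y^T = 0.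
Proof.
case/submxP => D -> XJX.
have -> : D *m X *m J *m (D *m X)^T = D *m (X *m J *m X^T) *m D^T.
  by rewrite trmx_mul !mulmxA.
by rewrite XJX mulmx0 mul0mx.
Qed.

Lemma isotropic_pencil n k (J : 'M[C]_n) (X Y : 'M[C]_(k, n)) a b :
    X *m J *m X^T = 0 -> Y *m J *m Y^T = 0 -> (X + Y) *m J *m (X + Y)^T = 0 ->
  (a *: X + b *: Y) *m J *m (a *: X + b *: Y)^T = 0.
Proof.
move=> XX YY.
rewrite !linearD /= !linearZ /= !mulmxDl -!scalemxAl XX YY !scaler0 add0r addr0.
by rewrite addr0 add0r !scalerA mulrC -scalerDr addrC => ->; rewrite scaler0.
Qed.

End Subspaces.

Definition ffun_upd (I : finType) (T : Type) (g : {ffun I -> T}) (i : I) (k : T) :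
  {ffun I -> T} := [ffun j => if j == i then k else g j].

Section Plucker.
Variable C : fieldType.

Lemma cauchy_binet d n (X : 'M[C]_(d, n)) (M : 'M[C]_(n, d)) :
  \det (X *m M) = \sum_(g : {ffun 'I_d -> 'I_n}) pluck X g * \prod_j M (g j) j.
Proof.
rewrite -det_tr trmx_mul.
transitivity (\sum_(s : 'S_d) (-1) ^+ s *
   \sum_(f : {ffun 'I_d -> 'I_n}) \prod_i (M (f i) i * X (s i) (f i))).
  apply: eq_bigr => s _; congr (_ * _).
  under eq_bigr => i _ do rewrite mxE.
  rewrite bigA_distr_bigA /=.
  by apply: eq_bigr => f _; apply: eq_bigr => i _; rewrite !mxE.
under eq_bigr do rewrite big_distrr.
rewrite exchange_big /=; apply: eq_bigr => f _.
rewrite mulrC /pluck -det_tr /determinant big_distrr /=.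
apply: eq_bigr => s _; rewrite big_split /= mulrCA; congr (_ * (_ * _)).
by apply: eq_bigr => i _; rewrite !mxE.
Qed.

Lemma pluck_mulmxr d n m (X : 'M[C]_(d, n)) (M : 'M[C]_(n, m)) h :
  pluck (X *m M) h = \sum_(g : {ffun 'I_d -> 'I_n}) pluck X g * \prod_j M (g j) (h j).
Proof.
rewrite /pluck -mulmx_colsub cauchy_binet; apply: eq_bigr => g _.
by congr (_ * _); apply: eq_bigr => j _; rewrite mxE.
Qed.

Lemma pluck_mulmxl d n (D : 'M[C]_d) (X : 'M[C]_(d, n)) g :
  pluck (D *m X) g = \det D * pluck X g.
Proof. by rewrite /pluck -mulmx_colsub det_mulmx. Qed.

Lemma pluckZ d n a (X : 'M[C]_(d, n)) g : pluck (a *: X) g = a ^+ d * pluck X g.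
Proof. by rewrite /pluck -detZ; congr (\det _); apply/matrixP => i j; rewrite !mxE. Qed.

Lemma pluck_neq0_rank d n (X : 'M[C]_(d, n)) g : pluck X g != 0 -> \rank X = d.
Proof.
move=> Xg; apply/eqP; rewrite eqn_leq rank_leq_row /=.
have uX : colsub g X \in unitmx by rewrite unitmxE unitfE.
by rewrite -{1}(mxrank_unit uX) -[X in colsub g X]mulmx1 -mulmx_colsub mxrankM_maxl.
Qed.

Lemma rank_pluck_neq0 d n (X : 'M[C]_(d, n)) : \rank X = d -> exists g, pluck X g != 0.
Proof.
move=> rX; have fX : row_full X^T by rewrite /row_full mxrank_tr rX.
exists (finfun (fullrankfun fX)); have := fullrowsub_unit fX.
rewrite unitmxE unitfE /pluck -det_tr.
suff -> : colsub [ffun x => fullrankfun fX x] X = (rowsub (fullrankfun fX) X^T)^T by [].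
by apply/matrixP => i j; rewrite !mxE ffunE.
Qed.

Lemma det_colsub_upd d n (N : 'M[C]_(d, n)) (g0 : {ffun 'I_d -> 'I_n}) i k :
  colsub g0 N = 1%:M -> \det (colsub (ffun_upd g0 i k) N) = N i k.
Proof.
move=> /matrixP N1.
have Ng0 a b : N a (g0 b) = (a == b)%:R by have := N1 a b; rewrite !mxE.
have lift_neq a : (lift i a == i) = false by apply/negbTE; rewrite eq_sym neq_lift.
pose Ci := \matrix_(a, b) (if a == i then (if b == i then 0 else N b k)
                           else ((a == b)%:R : C)).
rewrite -det_tr (@determinant_multilinear _ _ _ 1%:M Ci i (N i k) 1).
- rewrite det1 mulr1 -det_tr (expand_det_row _ i) big1 ?mulr0 ?addr0 // => j _.
  by rewrite !mxE eqxx; case: (j == i); rewrite ?mul0r.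
- apply/rowP => b; rewrite !mxE ffunE eqxx [i == b]eq_sym.
  by case: eqP => [->|_]; rewrite ?mulr1 ?mul1r ?addr0 ?mulr0 ?add0r.
- by apply/matrixP => a b; rewrite !mxE ffunE lift_neq Ng0 eq_sym.
- by apply/matrixP => a b; rewrite !mxE ffunE lift_neq Ng0 eq_sym.
Qed.

Lemma chart_coord_pluck d n (X : 'M[C]_(d, n)) g0 i k : pluck X g0 != 0 ->
  (invmx (colsub g0 X) *m X) i k = pluck X (ffun_upd g0 i k) / pluck X g0.
Proof.
move=> X0; have uX : colsub g0 X \in unitmx by rewrite unitmxE unitfE.
have N1 : colsub g0 (invmx (colsub g0 X) *m X) = 1%:M by rewrite -mulmx_colsub mulVmx.
by rewrite -(det_colsub_upd i k N1) -/(pluck _ _) pluck_mulmxl det_inv mulrC.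
Qed.

Lemma eqmx_pluck_prop d n (A B : 'M[C]_(d, n)) (lam : C) g0 :
  lam != 0 -> pluck B g0 != 0 -> (forall g, pluck A g = lam * pluck B g) ->
  (A == B)%MS.
Proof.
move=> lam0 B0 AB; have A0 : pluck A g0 != 0 by rewrite AB mulf_neq0.
have normal_eqmx (X : 'M[C]_(d, n)) : pluck X g0 != 0 ->
    (invmx (colsub g0 X) *m X :=: X)%MS.
  by move=> X0; apply: eqmxMfull; rewrite row_full_unit unitmx_inv unitmxE unitfE.
apply/eqmxP; apply: eqmx_trans (eqmx_sym (normal_eqmx _ A0)) _.
apply: eqmx_trans (normal_eqmx _ B0).
suff -> : invmx (colsub g0 A) *m A = invmx (colsub g0 B) *m B by [].
apply/matrixP => i k; rewrite !chart_coord_pluck // !AB.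
by rewrite invfM mulrACA divff ?mul1r.
Qed.

Lemma pluck_upd_matrix d n (X : 'M[C]_(d, n)) (rho : {ffun 'I_d -> 'I_n} -> C) c g0 :
    c != 0 -> (forall g, pluck X g = c * rho g) -> rho g0 != 0 ->
  forall g, pluck (\matrix_(i, k) rho (ffun_upd g0 i k)) g * rho g0 = rho g0 ^+ d * rho g.
Proof.
move=> c0 Xrho r0 g; have X0 : pluck X g0 != 0 by rewrite Xrho mulf_neq0.
have -> : \matrix_(i, k) rho (ffun_upd g0 i k) = rho g0 *: (invmx (colsub g0 X) *m X).
  by apply/matrixP => i k; rewrite mxE [RHS]mxE chart_coord_pluck // !Xrho; field; apply/andP.
rewrite pluckZ pluck_mulmxl det_inv -/(pluck X g0) !Xrho.
by field; apply/andP.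
Qed.

Lemma dvdp_det_cols d (A : 'M[{poly C}]_d) (a : 'I_d -> {poly C}) :
  (forall i j, a j %| A i j) -> \prod_j a j %| \det A.
Proof.
move=> aA; have -> : A = (\matrix_(i, j) (A i j %/ a j)) *m diag_mx (\row_j a j).
  by apply/matrixP => i j; rewrite mul_mx_diag !mxE divpK.
rewrite det_mulmx det_diag; apply: dvdp_mull.
by rewrite [X in _ %| X](eq_bigr a) // => j _; rewrite mxE.
Qed.

End Plucker.

Definition lcols d : {ffun 'I_d -> 'I_(d + d)} := [ffun j => lshift d j].
Definition rcols d : {ffun 'I_d -> 'I_(d + d)} := [ffun j => rshift d j].
Definition nleft d (g : {ffun 'I_d -> 'I_(d + d)}) : nat := #|[pred j | (g j < d)%N]|.

Lemma nleftC d (g : {ffun 'I_d -> 'I_(d + d)}) :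
  #|[pred j | ~~ (g j < d)%N]| = (d - nleft g)%N.
Proof.
rewrite /nleft -[X in (X - _)%N](card_ord d) -(cardC [pred j | (g j < d)%N]) addKn.
exact: eq_card.
Qed.

Lemma nleft_leq d (g : {ffun 'I_d -> 'I_(d + d)}) : (nleft g <= d)%N.
Proof. by rewrite -[X in (_ <= X)%N](card_ord d) max_card. Qed.

Definition lrswap d (k : 'I_(d + d)) : 'I_(d + d) :=
  match split k with inl j => rshift d j | inr j => lshift d j end.

Lemma lrswap_lshift d j : lrswap (lshift d j) = rshift d j.
Proof. by rewrite /lrswap -[lshift d j]/(unsplit (inl j)) unsplitK. Qed.

Lemma lrswap_rshift d j : lrswap (rshift d j) = lshift d j.
Proof. by rewrite /lrswap -[rshift d j]/(unsplit (inr j)) unsplitK. Qed.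

Lemma lrswapK d : involutive (@lrswap d).
Proof.
move=> k; rewrite -(splitK k); case: (split k) => j /=.
  by rewrite lrswap_lshift lrswap_rshift.
by rewrite lrswap_rshift lrswap_lshift.
Qed.

Lemma lrswap_ltn d k : (@lrswap d k < d)%N = ~~ (k < d)%N.
Proof.
rewrite -(splitK k); case: (split k) => j /=.
  by rewrite lrswap_lshift /= ltnNge leq_addr ltn_ord.
by rewrite lrswap_rshift /= ltn_ord ltnNge leq_addr.
Qed.

Lemma nleft_lrswap d (g : {ffun 'I_d -> 'I_(d + d)}) :
  nleft [ffun j => lrswap (g j)] = (d - nleft g)%N.
Proof. by rewrite -nleftC; apply: eq_card => j; rewrite !inE ffunE lrswap_ltn. Qed.

Section Blocks.
Variables (C : fieldType) (d : nat).
Implicit Types (g : {ffun 'I_d -> 'I_(d + d)}) (s t : C).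

Lemma colsub_lcols m (A B : 'M[C]_(m, d)) : colsub (lcols d) (row_mx A B) = A.
Proof. by apply/matrixP => i j; rewrite mxE ffunE row_mxEl. Qed.

Lemma colsub_rcols m (A B : 'M[C]_(m, d)) : colsub (rcols d) (row_mx A B) = B.
Proof. by apply/matrixP => i j; rewrite mxE ffunE row_mxEr. Qed.

Lemma colsub_lrswap m (A B : 'M[C]_(m, d)) :
  colsub (@lrswap d) (row_mx A B) = row_mx B A.
Proof.
apply/matrixP => i k; rewrite -(splitK k); case: (split k) => j /=;
  by rewrite mxE ?lrswap_lshift ?lrswap_rshift ?row_mxEl ?row_mxEr.
Qed.

Lemma std_pencil_entry s t i k :
  (row_mx t%:M s%:M : 'M[C]_(d, d + d)) i k =
  (row_mx 1%:M 1%:M : 'M[C]_(d, d + d)) i k * (if (k < d)%N then t else s).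
Proof.
rewrite -(splitK k); case: (split k) => j /=.
  by rewrite !row_mxEl !mxE ltn_ord mulr_natl.
by rewrite !row_mxEr !mxE ltnNge leq_addr mulr_natl.
Qed.

Lemma pluck_std_pencil s t g :
  pluck (row_mx t%:M s%:M : 'M[C]_(d, d + d)) g =
  pluck (row_mx 1%:M 1%:M) g * (s ^+ (d - nleft g) * t ^+ nleft g).
Proof.
rewrite /pluck; have -> : colsub g (row_mx t%:M s%:M : 'M[C]_(d, d + d)) =
    colsub g (row_mx 1%:M 1%:M) *m diag_mx (\row_j if (g j < d)%N then t else s).
  by apply/matrixP => a j; rewrite mul_mx_diag [LHS]mxE std_pencil_entry !mxE.
rewrite det_mulmx det_diag; congr (_ * _).
rewrite (bigID [pred j | (g j < d)%N]) /=.
rewrite (eq_bigr (fun=> t)); last by move=> j gj; rewrite mxE gj.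
rewrite [X in _ * X](eq_bigr (fun=> s)); last by move=> j /negPf gj; rewrite mxE gj.
by rewrite (prodr_const [pred j | ~~ (g j < d)%N]) nleftC prodr_const mulrC.
Qed.

Lemma std_pencil_pluck_neq0 s t : (s, t) != (0, 0) ->
  exists g, pluck (row_mx t%:M s%:M : 'M[C]_(d, d + d)) g != 0.
Proof.
move=> st; have [t0|t0] := eqVneq t 0.
  have s0 : s != 0 by move: st; rewrite t0 xpair_eqE eqxx andbT.
  by exists (rcols d); rewrite /pluck colsub_rcols det_scalar expf_neq0.
by exists (lcols d); rewrite /pluck colsub_lcols det_scalar expf_neq0.
Qed.

End Blocks.

Definition plucker_forms (C : fieldType) d n e (Y : C -> C -> 'M[C]_(d, n))
    (q : {ffun 'I_d -> 'I_n} -> {poly C}) : Prop :=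
  forall s t : C, (s, t) != (0, 0) ->
    exists c : C, c != 0 /\ forall g, pluck (Y s t) g = c * hev e (q g) s t.

Section PluckerForms.
Variable C : fieldType.

Lemma plucker_forms_mulmxr d n m e (Y : C -> C -> 'M[C]_(d, n)) q (M : 'M[C]_(n, m)) :
  plucker_forms e Y q ->
  plucker_forms e (fun s t => Y s t *m M)
    (fun h => \sum_(g : {ffun 'I_d -> 'I_n}) (\prod_j M (g j) (h j)) *: q g).
Proof.
move=> Yq s t st; have [c [c0 Yc]] := Yq s t st; exists c; split => // h.
rewrite pluck_mulmxr hev_sum big_distrr; apply: eq_bigr => g _.
by rewrite hevZ Yc -mulrA [_ * hev _ _ _ _]mulrC.
Qed.

Lemma plucker_forms_std_pencil d :
  plucker_forms d (fun s t : C => row_mx t%:M s%:M : 'M[C]_(d, d + d))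
    (fun g => pluck (row_mx 1%:M 1%:M) g *: 'X^(d - nleft g)).
Proof.
move=> s t _; exists 1; split => [|g]; first exact: oner_neq0.
by rewrite mul1r pluck_std_pencil hevZ hevXn ?leq_subr // subKn ?nleft_leq.
Qed.

End PluckerForms.

Section Chart.
Variable C : numFieldType.

Lemma Xn_nleft_dvdp d (Z : C -> 'M[C]_(d, d + d))
    (r : {ffun 'I_d -> 'I_(d + d)} -> {poly C}) :
    (forall x, exists c, c != 0 /\ forall g, pluck (Z x) g = c * (r g).[x]) ->
    (Z 0 == row_mx 0 1%:M)%MS ->
  forall g, 'X^(nleft g) %| r g.
Proof.
move=> Zr Z0 g.
have W1 : colsub (rcols d) (row_mx 0 1%:M : 'M[C]_(d, d + d)) = 1%:M by rewrite colsub_rcols.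
have rW : \rank (row_mx 0 1%:M : 'M[C]_(d, d + d)) = d.
  by apply: (@pluck_neq0_rank _ _ _ _ (rcols d)); rewrite /pluck W1 det1 oner_neq0.
have [D uD eZ0] := eqmx_unit_mul Z0 rW.
have [c0 [c00 Zr0]] := Zr 0.
have r_at0 h : (r h).[0] = \det D / c0 * pluck (row_mx 0 1%:M) h.
  by apply: (mulfI c00); rewrite -Zr0 eZ0 pluck_mulmxl; field.
set Q := r (rcols d).
have Q0 : Q.[0] != 0.
  rewrite r_at0 /pluck W1 det1 mulr1 mulf_neq0 ?invr_eq0 //.
  by rewrite -unitfE -unitmxE.
have root_left i j : root (r (ffun_upd (rcols d) i (lshift d j))) 0.
  by rewrite /root r_at0 /pluck det_colsub_upd // row_mxEl mxE mulr0.
(* The chart matrix at x, scaled by Q(x): its left columns vanish at 0 and its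
   maximal minors are the r g up to the factor Q^(d-1). *)
pose M := \matrix_(i, k) r (ffun_upd (rcols d) i k).
have det_M : \det (colsub g M) * Q = Q ^+ d * r g.
  apply: (@poly_eq_off_roots _ Q); first by apply: contraNneq Q0 => ->; rewrite horner0.
  move=> x Qx; have [c [c0x Zrx]] := Zr x.
  rewrite !hornerE -horner_evalE -det_map_mx map_mxsub.
  have -> : map_mx (horner_eval x) M = \matrix_(i, k) (r (ffun_upd (rcols d) i k)).[x].
    by apply/matrixP => i k; rewrite !mxE.
  exact: (pluck_upd_matrix c0x Zrx Qx).
have dvd_M : 'X^(nleft g) %| \det (colsub g M).
  have -> : 'X^(nleft g) = \prod_j (if (g j < d)%N then 'X else 1 : {poly C}).
    by rewrite -big_mkcond (prodr_const [pred j | (g j < d)%N]).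
  apply: dvdp_det_cols => i j; rewrite !mxE; case: ifP => [gjd|_]; last exact: dvd1p.
  have -> : g j = lshift d (Ordinal gjd) by apply: val_inj.
  by rewrite -(subr0 'X) -polyC0 dvdp_XsubCl root_left.
have cop : coprimep 'X^(nleft g) (Q ^+ d).
  by rewrite coprimep_expl // coprimep_expr // coprimep_sym coprimepX.
by rewrite -(Gauss_dvdpr _ cop) -det_M dvdp_mulr.
Qed.

End Chart.

Section StandardFrame.
Variables (C : numFieldType) (d : nat).
Variables (Y : C -> C -> 'M[C]_(d, d + d)) (q : {ffun 'I_d -> 'I_(d + d)} -> {poly C}).
Hypothesis Yq : plucker_forms d Y q.
Hypothesis YU : (Y 0 1 == row_mx 1%:M 0)%MS.
Hypothesis YW : (Y 1 0 == row_mx 0 1%:M)%MS.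

Lemma plucker_forms_std_monomial g s t :
  hev d (q g) s t = (q g)`_(d - nleft g) * s ^+ (d - nleft g) * t ^+ nleft g.
Proof.
have nz1 x : ((1, x) : C * C) != (0, 0) by rewrite xpair_eqE oner_eq0.
have nz1' x : ((x, 1) : C * C) != (0, 0) by rewrite xpair_eqE oner_eq0 andbF.
have at_W h : 'X^(nleft h) %| \poly_(i < d.+1) (q h)`_(d - i).
  apply: (@Xn_nleft_dvdp _ _ (fun x => Y 1 x)
    (fun h => \poly_(i < d.+1) (q h)`_(d - i))) => // x.
  have [c [c0 Yc]] := Yq (nz1 x).
  by exists c; split => // h'; rewrite Yc hev_at_s1.
have at_U h : 'X^(nleft h) %| \poly_(i < d.+1) (q [ffun j => lrswap (h j)])`_i.
  apply: (@Xn_nleft_dvdp _ _ (fun x => colsub (@lrswap d) (Y x 1))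
    (fun h => \poly_(i < d.+1) (q [ffun j => lrswap (h j)])`_i)).
    move=> x; have [c [c0 Yc]] := Yq (nz1' x).
    exists c; split => // h'; rewrite -hev_at_t1 -Yc /pluck -colsub_comp.
    by congr (\det _); apply: eq_colsub => j; rewrite /= ffunE.
  by rewrite -(colsub_lrswap 1%:M 0); apply: colsub_eqmx.
have swapK : [ffun j => lrswap ([ffun j => lrswap (g j)] j)] = g.
  by apply/ffunP => j; rewrite !ffunE lrswapK.
have kd := nleft_leq g.
rewrite (@hev_monomial _ _ (d - nleft g)) ?leq_subr ?subKn // => i id ik.
have [ilt|igt] := ltnP i (d - nleft g).
  have := at_U [ffun j => lrswap (g j)]; rewrite swapK nleft_lrswap.
  by move/coef_Xn_dvdp/(_ ilt); rewrite coef_poly ltnS id.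
have {}igt : (d - nleft g < i)%N by rewrite ltn_neqAle eq_sym ik.
have /coef_Xn_dvdp : (d - i < nleft g)%N by rewrite ltn_subLR // addnC -ltn_subLR.
by move/(_ _ _ (at_W g)); rewrite coef_poly ltnS leq_subr subKn.
Qed.

Hypothesis YV : (Y 1 1 == row_mx 1%:M 1%:M)%MS.

Lemma plucker_forms_std_unique s t : (s, t) != (0, 0) ->
  (Y s t == row_mx t%:M s%:M)%MS.
Proof.
move=> st; have nz11 : ((1, 1) : C * C) != (0, 0) by rewrite xpair_eqE oner_eq0.
have [g1 /pluck_neq0_rank rV] := std_pencil_pluck_neq0 d nz11.
have [D uD eV] := eqmx_unit_mul YV rV.
have D0 : \det D != 0 by rewrite -unitfE -unitmxE.
have [c1 [c10 Y11]] := Yq nz11.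
have [c [c0 Yst]] := Yq st.
have [g0 g0n] := std_pencil_pluck_neq0 d st.
apply: (@eqmx_pluck_prop _ _ _ _ _ (c * \det D / c1) g0) => // [|g].
  by rewrite mulf_neq0 ?invr_eq0 ?mulf_neq0.
have := Y11 g; rewrite eV pluck_mulmxl plucker_forms_std_monomial !expr1n !mulr1.
move=> coef_g; rewrite Yst plucker_forms_std_monomial pluck_std_pencil.
have -> : (q g)`_(d - nleft g) = \det D * pluck (row_mx 1%:M 1%:M) g / c1.
  by rewrite coef_g mulrC mulKf.
by field.
Qed.

End StandardFrame.

Section LagrangianPencil.
Variables (C : numFieldType) (d : nat) (J P : 'M[C]_(d + d)).
Hypothesis uP : P \in unitmx.

Lemma std_pencil_LGmorphism :
    let U0 := row_mx 1%:M 0 *m P in let W0 := row_mx 0 1%:M *m P in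
    U0 *m J *m U0^T = 0 -> W0 *m J *m W0^T = 0 ->
    (U0 + W0) *m J *m (U0 + W0)^T = 0 ->
  LGmorphism_deg J (fun s t => row_mx t%:M s%:M *m P) d.
Proof.
move=> U0 W0 iU iW iV.
have fP s t : row_mx t%:M s%:M *m P = t *: U0 + s *: W0.
  rewrite /U0 /W0 !scalemxAl -mulmxDl !scale_row_mx add_row_mx.
  by rewrite !scalemx1 !scaler0 addr0 add0r.
have rf s t : (s, t) != (0, 0) -> \rank (row_mx t%:M s%:M *m P) = d.
  move=> st; have [g gn] := std_pencil_pluck_neq0 d st.
  by rewrite mxrankMfree ?row_free_unit // (pluck_neq0_rank gn).
have fq := plucker_forms_mulmxr P (@plucker_forms_std_pencil C d).
split=> [s t st|]; first by split; rewrite ?rf // fP isotropic_pencil.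
exists (fun h => \sum_(g : {ffun 'I_d -> 'I_(d + d)})
  (\prod_j P (g j) (h j)) *: (pluck (row_mx 1%:M 1%:M) g *: 'X^(d - nleft g))).
split=> [h|]; last split=> [s t st|//].
  apply: (big_ind (fun p : {poly C} => (size p <= d.+1)%N)) => [|p r|g _].
  - by rewrite size_poly0.
  - by move=> ? ?; apply: leq_trans (size_polyD _ _) _; rewrite geq_max; apply/andP.
  apply: leq_trans (size_scale_leq _ _) _; apply: leq_trans (size_scale_leq _ _) _.
  by rewrite size_polyXn ltnS leq_subr.
have [c [_ fc]] := fq s t st; have [g gn] := rank_pluck_neq0 (rf s t st).
by exists g; apply: contraNneq gn; rewrite fc => ->; rewrite mulr0.
Qed.

Lemma LGmorphism_frame_unique (f : C -> C -> 'M[C]_(d, d + d)) :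
    LGmorphism_deg J f d ->
    (f 0 1 == row_mx 1%:M 0 *m P)%MS -> (f 1 1 == row_mx 1%:M 1%:M *m P)%MS ->
    (f 1 0 == row_mx 0 1%:M *m P)%MS ->
  forall s t, (s, t) != (0, 0) -> (f s t == row_mx t%:M s%:M *m P)%MS.
Proof.
move=> [_ [q [_ [_ fq]]]] fU fV fW s t st; rewrite -eqmx_mulmx_invmx //.
by apply: (plucker_forms_std_unique (plucker_forms_mulmxr (invmx P) fq));
  rewrite ?eqmx_mulmx_invmx.
Qed.

End LagrangianPencil.

Theorem mainTheorem4 (R : realType) (d : nat) (J : 'M[R[i]]_(d.*2))
    (U V W : 'M[R[i]]_(d, d.*2)) :
  (0 < d)%N ->
  symplectic J ->
  lagrangian J U -> lagrangian J V -> lagrangian J W ->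
  \rank (U :&: V)%MS = 0%N -> \rank (U :&: W)%MS = 0%N ->
  \rank (V :&: W)%MS = 0%N ->
  exists f : R[i] -> R[i] -> 'M[R[i]]_(d, d.*2),
    [/\ LGmorphism_deg J f d,
        (f 0 1 == U)%MS, (f 1 1 == V)%MS, (f 1 0 == W)%MS &
        forall f' : R[i] -> R[i] -> 'M[R[i]]_(d, d.*2),
          LGmorphism_deg J f' d ->
          (f' 0 1 == U)%MS -> (f' 1 1 == V)%MS -> (f' 1 0 == W)%MS ->
          forall s t : R[i], (s, t) != (0, 0) -> (f' s t == f s t)%MS].
Proof.
move: J U V W; rewrite -addnn => J U V W _ _ [rU iU] [rV iV] [rW iW] rUV rUW rVW.
have [P uP [PU PV PW]] := general_position_frame rU rV rW rUV rUW rVW.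
have eqmx_frame X Y (A : 'M_(d, d + d)) : (X == Y)%MS -> (A *m P == Y)%MS -> (X == A *m P)%MS.
  by move=> /eqmxP XY /eqmxP AY; apply/eqmxP; apply: eqmx_trans XY (eqmx_sym AY).
exists (fun s t => row_mx t%:M s%:M *m P); split=> /=; rewrite ?raddf0 //.
- apply: std_pencil_LGmorphism => //; first exact: isotropic_submx (andP PU).1 iU.
    exact: isotropic_submx (andP PW).1 iW.
  by rewrite -mulmxDl add_row_mx addr0 add0r PV.
- by rewrite PV; apply/eqmxP.
move=> f fdeg fU fV fW; apply: (LGmorphism_frame_unique uP fdeg).
- exact: eqmx_frame fU PU.
- by rewrite PV.
- exact: eqmx_frame fW PW.
Qed.
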